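(* For every integer $m\ge4$, \[ \sum_{n=1}^{\infty}\frac{h_n^{(3)}}{n^{m}}=\sum_{n=1}^{\infty}h_n^{(2)}\zeta(m,n)=\tfrac12\zeta_H(m-2)+\tfrac32\zeta_H(m-1)+\zeta_H(m)-\tfrac54\zeta(m-1)-\tfrac34\zeta(m-2). \]
   Context: Hyperharmonic numbers: $h_n^{(0)}=1/n$ for $n\ge1$, and for $r\ge1$, $h_n^{(r)}=\sum_{j=1}^{n}h_j^{(r-1)}$. $H_n=\sum_{j=1}^n 1/j$. $\zeta$ is the Riemann zeta function, $\zeta(s,a)=\sum_{j=0}^\infty (j+a)^{-s}$ the Hurwitz zeta function, and $\zeta_H(s)=\sum_{n=1}^{\infty}H_n/n^{s}$ for integers $s\ge2$. *)

From Stdlib Require Import Reals ClassicalEpsilon.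
Open Scope R_scope.

Fixpoint sum1 (f : nat -> R) (n : nat) : R :=
  match n with
  | O => 0
  | S k => sum1 f k + f (S k)
  end.

(* hyperharmonic numbers h_n^{(r)} (only meaningful for n >= 1) *)
Fixpoint hyperharmonic (r n : nat) : R :=
  match r with
  | O => / INR n
  | S r' => sum1 (hyperharmonic r') n
  end.

Definition harmonic (n : nat) : R := sum1 (fun j => / INR j) n.

(* value of a series sum_{k>=0} u k (chosen classically; meaningful when it converges) *)
Definition series_sum (u : nat -> R) : R :=
  epsilon (inhabits 0) (fun l => infinite_sum u l).

Definition zeta (s : nat) : R :=
  series_sum (fun k => / (INR (S k)) ^ s).

Definition hurwitz_zeta (s : nat) (a : R) : R :=
  series_sum (fun j => / (INR j + a) ^ s).

Definition zetaH (s : nat) : R :=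
  series_sum (fun k => harmonic (S k) / (INR (S k)) ^ s).

From Stdlib Require Import Reals Lra Lia Psatz ClassicalEpsilon.
Open Scope R_scope.

(* The recursion h_n^(r+1) = h_(n-1)^(r+1) + h_n^(r) gives the closed form
   h_n^(3) = (n+1)(n+2)/2 H_n - n(3n+5)/4, so h_n^(3)/n^m is termwise a linear combination
   of H_n/n^s and 1/n^s with s in {m-2, m-1, m}; all of these series converge because they
   are dominated by H_n/n^2, whose partial sums are bounded by a telescoping estimate.

   For a positive integer a, zeta(m,a) is the tail sum_{i>=a} 1/i^m.
   Abel summation turns sum_{k<=N} h_k^(r) (tail at k) into sum_{k<=N} h_k^(r+1)/k^m plus a
   boundary term h_N^(r+1) (tail at N+1); monotonicity of h^(r+1) squeezes that boundary
   term between 0 and the remainder of the first series, so both series have the same sum. *)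

(* [prefix_sum u n] is u 0 + ... + u (n-1); unlike [sum_f_R0] it allows the empty sum. *)
Fixpoint prefix_sum (u : nat -> R) (n : nat) : R :=
  match n with O => 0 | S k => prefix_sum u k + u k end.

Lemma sum_f_R0_prefix_sum u n : sum_f_R0 u n = prefix_sum u (S n).
Proof. induction n as [|n IH]; simpl in *; [ring | rewrite IH; reflexivity]. Qed.

Lemma infinite_sum_ext u v l :
  (forall k, u k = v k) -> infinite_sum u l -> infinite_sum v l.
Proof.
  intros Huv Hu. apply (Un_cv_ext (sum_f_R0 u)); [|exact Hu].
  intros n; apply sum_eq; intros; apply Huv.
Qed.

Lemma infinite_sum_plus u v a b :
  infinite_sum u a -> infinite_sum v b -> infinite_sum (fun k => u k + v k) (a + b).
Proof.
  intros Hu Hv. apply (Un_cv_ext (fun n => sum_f_R0 u n + sum_f_R0 v n)).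
  - intros n; symmetry; apply plus_sum.
  - now apply CV_plus.
Qed.

Lemma infinite_sum_scal c u a :
  infinite_sum u a -> infinite_sum (fun k => c * u k) (c * a).
Proof.
  intros Hu. apply (Un_cv_ext (fun n => c * sum_f_R0 u n)).
  - intros n; rewrite scal_sum; apply sum_eq; intros; ring.
  - apply (CV_mult (fun _ => c)); [|exact Hu].
    intros eps Heps; exists 0%nat; intros n _; unfold Rdist.
    rewrite Rminus_diag, Rabs_R0; lra.
Qed.

Lemma infinite_sum_le u v a b :
  (forall k, u k <= v k) -> infinite_sum u a -> infinite_sum v b -> a <= b.
Proof.
  intros Huv Hu Hv.
  apply (Rle_cv_lim (Un := sum_f_R0 u) (Vn := sum_f_R0 v)); auto.
  intros n; apply sum_Rle; auto.
Qed.

Lemma infinite_sum_nonneg u a :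
  (forall k, 0 <= u k) -> infinite_sum u a -> 0 <= a.
Proof.
  intros Hu Ha. apply (infinite_sum_le (fun _ => 0) u); auto.
  intros eps Heps; exists 0%nat; intros n _; unfold Rdist.
  rewrite sum_cte, Rmult_0_l, Rminus_diag, Rabs_R0; lra.
Qed.

Lemma infinite_sum_tail u l k :
  infinite_sum u l -> infinite_sum (fun j => u (j + k)%nat) (l - prefix_sum u k).
Proof.
  assert (Htail : forall n,
            sum_f_R0 (fun j => u (j + k)%nat) n = sum_f_R0 u (n + k) - prefix_sum u k).
  { induction n as [|n IH]; simpl.
    - rewrite sum_f_R0_prefix_sum; simpl; ring.
    - rewrite IH; ring. }
  intros Hu eps Heps. destruct (Hu eps Heps) as [N HN]. exists N; intros n Hn.
  unfold Rdist; rewrite Htail.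
  replace (sum_f_R0 u (n + k) - prefix_sum u k - (l - prefix_sum u k))
    with (sum_f_R0 u (n + k) - l) by ring.
  apply HN; lia.
Qed.

Lemma summable_compare u v :
  (forall k, 0 <= u k <= v k) -> (exists l, infinite_sum v l) -> exists l, infinite_sum u l.
Proof.
  intros Huv [l Hl].
  destruct (Rseries_CV_comp u v Huv (exist _ l Hl)) as [l' Hl']. now exists l'.
Qed.

Lemma series_sum_spec u : (exists l, infinite_sum u l) -> infinite_sum u (series_sum u).
Proof. intros H. unfold series_sum. now apply epsilon_spec. Qed.

Lemma Un_cv_squeeze_remainder (a b r : nat -> R) l :
  (forall N, a N = b N + r N) -> (forall N, 0 <= r N <= l - b N) ->
  Un_cv b l -> Un_cv a l.
Proof.
  intros Habr Hr Hb eps Heps. destruct (Hb eps Heps) as [N HN]. exists N; intros n Hn.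
  specialize (HN n Hn); specialize (Hr n); unfold Rdist in *. rewrite Habr.
  apply Rabs_def2 in HN; apply Rabs_def1; lra.
Qed.

Lemma hyperharmonic_S r n :
  hyperharmonic (S r) (S n) = hyperharmonic (S r) n + hyperharmonic r (S n).
Proof. reflexivity. Qed.

Lemma hyperharmonic_nonneg r n : 0 <= hyperharmonic r n.
Proof.
  revert n; induction r as [|r IH]; intros n.
  - simpl. destruct n as [|n].
    + rewrite INR_0, Rinv_0; lra.
    + left; apply Rinv_0_lt_compat, lt_0_INR; lia.
  - induction n as [|n IHn]; [simpl; lra|].
    rewrite hyperharmonic_S; specialize (IH (S n)); lra.
Qed.

Lemma hyperharmonic_mono r n k : hyperharmonic (S r) n <= hyperharmonic (S r) (k + n).
Proof.
  induction k as [|k IH]; [simpl; lra|].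
  change (S k + n)%nat with (S (k + n)). rewrite hyperharmonic_S.
  pose proof (hyperharmonic_nonneg r (S (k + n))); lra.
Qed.

Lemma harmonic_S n : harmonic (S n) = harmonic n + / INR (S n).
Proof. reflexivity. Qed.

Lemma harmonic_ge1 n : 1 <= harmonic (S n).
Proof.
  induction n as [|n IH]; [unfold harmonic; simpl; lra|].
  rewrite harmonic_S.
  assert (0 < / INR (S (S n))) by (apply Rinv_0_lt_compat, lt_0_INR; lia). lra.
Qed.

Lemma hyperharmonic2_closed n : hyperharmonic 2 n = (INR n + 1) * harmonic n - INR n.
Proof.
  induction n as [|n IH]; [unfold harmonic; simpl; lra|].
  rewrite hyperharmonic_S, IH. change (hyperharmonic 1 (S n)) with (harmonic (S n)).
  rewrite harmonic_S. assert (INR (S n) <> 0) by (apply not_0_INR; lia).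
  rewrite S_INR in *. field; auto.
Qed.

Lemma hyperharmonic3_closed n : hyperharmonic 3 n =
  (INR n ^ 2 + 3 * INR n + 2) / 2 * harmonic n - (3 * INR n ^ 2 + 5 * INR n) / 4.
Proof.
  induction n as [|n IH]; [unfold harmonic; simpl; lra|].
  rewrite hyperharmonic_S, IH, hyperharmonic2_closed, harmonic_S.
  assert (INR (S n) <> 0) by (apply not_0_INR; lia).
  rewrite S_INR in *. field; auto.
Qed.

(* One telescoping step: with x = n+1 >= 2, H_x/x^2 <= H_x/(x(x-1))
   = (H_(x-1) + 1)/(x-1) - (H_x + 1)/x. *)
Lemma harmonic_sq_telescoping n :
  harmonic (S (S n)) / INR (S (S n)) ^ 2
  <= (harmonic (S n) + 1) / INR (S n) - (harmonic (S (S n)) + 1) / INR (S (S n)).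
Proof.
  set (x := INR (S (S n))). set (h := harmonic (S (S n))).
  assert (Hx : 2 <= x) by (unfold x; rewrite !S_INR; pose proof (pos_INR n); lra).
  assert (Hh : 0 <= h) by (pose proof (harmonic_ge1 (S n)); unfold h; lra).
  assert (Hprev : harmonic (S n) = h - / x) by (unfold h, x; rewrite (harmonic_S (S n)); ring).
  assert (Hx1 : INR (S n) = x - 1) by (unfold x; rewrite (S_INR (S n)); ring).
  rewrite Hprev, Hx1.
  replace ((h - / x + 1) / (x - 1) - (h + 1) / x) with (h / (x * (x - 1))) by (field; lra).
  unfold Rdiv. apply Rmult_le_compat_l; auto. apply Rinv_le_contravar; nra.
Qed.

Lemma harmonic_sq_summable :
  exists l, infinite_sum (fun k => harmonic (S k) / INR (S k) ^ 2) l.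
Proof.
  set (g := fun k => harmonic (S k) / INR (S k) ^ 2).
  assert (Hg : forall k, 0 <= g k).
  { intros k; unfold g, Rdiv. pose proof (harmonic_ge1 k).
    assert (0 < / INR (S k) ^ 2) by (apply Rinv_0_lt_compat, pow_lt, lt_0_INR; lia). nra. }
  assert (Hbound : forall N, sum_f_R0 g N + (harmonic (S N) + 1) / INR (S N) <= 3).
  { induction N as [|N IH]; [unfold g, harmonic; simpl; lra|].
    simpl sum_f_R0. pose proof (harmonic_sq_telescoping N). unfold g at 2; lra. }
  destruct (growing_cv (sum_f_R0 g)) as [l Hl].
  - intros n; simpl; specialize (Hg (S n)); lra.
  - exists 3; intros x [N ->].
    assert (0 <= (harmonic (S N) + 1) / INR (S N)).
    { pose proof (harmonic_ge1 N). apply Rmult_le_pos; [lra | left; apply Rinv_0_lt_compat, lt_0_INR; lia]. }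
    specialize (Hbound N); lra.
  - now exists l.
Qed.

Lemma dominated_by_harmonic_sq u :
  (forall k, 0 <= u k <= harmonic (S k) / INR (S k) ^ 2) -> infinite_sum u (series_sum u).
Proof.
  intros Hu. apply series_sum_spec. exact (summable_compare _ _ Hu harmonic_sq_summable).
Qed.

Lemma inv_pow_bounds k s :
  (2 <= s)%nat -> 0 < / INR (S k) ^ s <= / INR (S k) ^ 2.
Proof.
  intros Hs. assert (1 <= INR (S k)) by (rewrite S_INR; pose proof (pos_INR k); lra).
  split; [apply Rinv_0_lt_compat, pow_lt; lra|].
  apply Rinv_le_contravar; [apply pow_lt; lra | apply Rle_pow; auto].
Qed.

Lemma zeta_converges s :
  (2 <= s)%nat -> infinite_sum (fun k => / INR (S k) ^ s) (zeta s).
Proof.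
  intros Hs. apply dominated_by_harmonic_sq; intros k.
  pose proof (inv_pow_bounds k s Hs). pose proof (harmonic_ge1 k). unfold Rdiv; nra.
Qed.

Lemma zetaH_converges s :
  (2 <= s)%nat -> infinite_sum (fun k => harmonic (S k) / INR (S k) ^ s) (zetaH s).
Proof.
  intros Hs. apply dominated_by_harmonic_sq; intros k.
  pose proof (inv_pow_bounds k s Hs). pose proof (harmonic_ge1 k). unfold Rdiv; nra.
Qed.

Lemma hurwitz_zeta_nat m k : (2 <= m)%nat ->
  hurwitz_zeta m (INR (S k)) = zeta m - prefix_sum (fun i => / INR (S i) ^ m) k.
Proof.
  intros Hm.
  assert (Htail : infinite_sum (fun j => / (INR j + INR (S k)) ^ m)
                    (zeta m - prefix_sum (fun i => / INR (S i) ^ m) k)).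
  { eapply infinite_sum_ext; [|exact (infinite_sum_tail _ _ k (zeta_converges m Hm))].
    intros j; cbv beta. rewrite <- plus_INR. do 3 f_equal. lia. }
  unfold hurwitz_zeta. symmetry. apply (uniqueness_sum _ _ _ Htail).
  apply series_sum_spec; eauto.
Qed.

Section AbelSummation.

Variables (r : nat) (z : nat -> R) (Z S1 : R).
Hypothesis z_nonneg : forall i, 0 <= z i.
Hypothesis z_sum : infinite_sum z Z.
Hypothesis weighted_sum : infinite_sum (fun k => hyperharmonic (S r) (S k) * z k) S1.

Lemma hyperharmonic_by_parts N :
  sum_f_R0 (fun k => hyperharmonic r (S k) * (Z - prefix_sum z k)) N =
  sum_f_R0 (fun k => hyperharmonic (S r) (S k) * z k) N
  + hyperharmonic (S r) (S N) * (Z - prefix_sum z (S N)).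
Proof.
  induction N as [|N IH]; simpl sum_f_R0.
  - rewrite (hyperharmonic_S r 0). change (hyperharmonic (S r) 0) with 0. simpl; ring.
  - rewrite IH, (hyperharmonic_S r (S N)). simpl; ring.
Qed.

Lemma abel_boundary_bounds N :
  0 <= hyperharmonic (S r) (S N) * (Z - prefix_sum z (S N))
    <= S1 - sum_f_R0 (fun k => hyperharmonic (S r) (S k) * z k) N.
Proof.
  pose proof (infinite_sum_tail _ _ (S N) z_sum) as Hz_tail.
  split.
  - apply Rmult_le_pos; [apply hyperharmonic_nonneg|].
    exact (infinite_sum_nonneg _ _ (fun j => z_nonneg (j + S N)) Hz_tail).
  - rewrite sum_f_R0_prefix_sum.
    apply (infinite_sum_le (fun j => hyperharmonic (S r) (S N) * z (j + S N)%nat)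
             (fun j => hyperharmonic (S r) (S (j + S N)) * z (j + S N)%nat)).
    + intros j. apply Rmult_le_compat_r; [apply z_nonneg|].
      exact (hyperharmonic_mono r (S N) (S j)).
    + exact (infinite_sum_scal _ _ _ Hz_tail).
    + exact (infinite_sum_tail _ _ (S N) weighted_sum).
Qed.

Lemma hyperharmonic_abel_summation :
  infinite_sum (fun k => hyperharmonic r (S k) * (Z - prefix_sum z k)) S1.
Proof.
  exact (Un_cv_squeeze_remainder _ _ _ _ hyperharmonic_by_parts abel_boundary_bounds
           weighted_sum).
Qed.

End AbelSummation.

Lemma hyperharmonic3_termwise p k :
  hyperharmonic 3 (S k) / INR (S k) ^ (p + 2) =
  / 2 * (harmonic (S k) / INR (S k) ^ p) + 3 / 2 * (harmonic (S k) / INR (S k) ^ (p + 1))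
  + harmonic (S k) / INR (S k) ^ (p + 2)
  + - (5 / 4) * / INR (S k) ^ (p + 1) + - (3 / 4) * / INR (S k) ^ p.
Proof.
  rewrite hyperharmonic3_closed, !pow_add.
  set (x := INR (S k)).
  assert (Hx : x <> 0) by (apply not_0_INR; lia).
  assert (x ^ p <> 0) by (apply pow_nonzero; auto).
  field; auto.
Qed.

Lemma hyperharmonic3_dirichlet p : (2 <= p)%nat ->
  infinite_sum (fun k => hyperharmonic 3 (S k) / INR (S k) ^ (p + 2))
    (/ 2 * zetaH p + 3 / 2 * zetaH (p + 1) + zetaH (p + 2)
     - 5 / 4 * zeta (p + 1) - 3 / 4 * zeta p).
Proof.
  intros Hp.
  replace (/ 2 * zetaH p + 3 / 2 * zetaH (p + 1) + zetaH (p + 2)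
           - 5 / 4 * zeta (p + 1) - 3 / 4 * zeta p)
    with (/ 2 * zetaH p + 3 / 2 * zetaH (p + 1) + zetaH (p + 2)
          + - (5 / 4) * zeta (p + 1) + - (3 / 4) * zeta p) by ring.
  apply (infinite_sum_ext _ _ _ (fun k => eq_sym (hyperharmonic3_termwise p k))).
  repeat apply infinite_sum_plus; try apply infinite_sum_scal;
    first [apply zetaH_converges | apply zeta_converges]; lia.
Qed.

Theorem mainTheorem4 (m : nat) (hm : (4 <= m)%nat) :
  let rhs := / 2 * zetaH (m - 2) + 3 / 2 * zetaH (m - 1) + zetaH m
             - 5 / 4 * zeta (m - 1) - 3 / 4 * zeta (m - 2) in
  infinite_sum (fun k => hyperharmonic 3 (S k) / (INR (S k)) ^ m) rhs /\
  infinite_sum (fun k => hyperharmonic 2 (S k) * hurwitz_zeta m (INR (S k))) rhs.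
Proof.
  destruct (Nat.le_exists_sub 2 m) as [p [Hmp _]]; [lia|]. subst m.
  replace (p + 2 - 2)%nat with p by lia. replace (p + 2 - 1)%nat with (p + 1)%nat by lia.
  intros rhs.
  assert (Hfirst : infinite_sum (fun k => hyperharmonic 3 (S k) / INR (S k) ^ (p + 2)) rhs)
    by (apply hyperharmonic3_dirichlet; lia).
  split; [exact Hfirst|].
  apply (infinite_sum_ext (fun k => hyperharmonic 2 (S k)
           * (zeta (p + 2) - prefix_sum (fun i => / INR (S i) ^ (p + 2)) k))).
  { intros k; rewrite hurwitz_zeta_nat by lia; reflexivity. }
  apply hyperharmonic_abel_summation.
  - intros i; left; apply (inv_pow_bounds i (p + 2)); lia.
  - apply zeta_converges; lia.
  - exact Hfirst.
Qed.
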